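(* Let $X$ be a Hausdorff space. Assume that there is a closed subset $F\subset X$ such that (a) both $F$ and $X-F$ are totally disconnected, and (b) the quotient space $X/F$ (obtained by collapsing $F$ to a single point) is hereditarily disconnected. Then $\mathcal{K}(X)$ is hereditarily disconnected.
   Context: For a $T_1$ space $X$, $\mathcal{K}(X)$ denotes the set of nonempty compact subsets of $X$ with the Vietoris topology, i.e. the topology generated by the sets $U^+=\{A: A\subset U\}$ and $U^-=\{A: A\cap U\neq\emptyset\}$ for $U$ open in $X$. A space is totally disconnected if for any two distinct points $x,y$ there is a clopen set containing $x$ but not $y$. A space is hereditarily disconnected if every nonempty connected subset is a singleton. *)

From HB Require Import structures.
From mathcomp Require Import all_boot all_order all_algebra.
From mathcomp Require Import all_classical all_reals all_analysis.

Set Implicit Arguments.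
Unset Strict Implicit.
Unset Printing Implicit Defensive.

Local Open Scope classical_set_scope.

Definition paper_totally_disconnected {T : topologicalType} (A : set T) :=
  forall x y : T, A x -> A y -> x != y ->
    exists U : set (subspace A), [/\ clopen U, U x & ~ U y].

Definition hereditarily_disconnected (T : topologicalType) :=
  forall C : set T, C !=set0 -> connected C -> exists x : T, C = [set x].

Section Collapse.
Context {X : topologicalType} (F : set X).

Definition collapse_rel : rel X := fun x y => (x == y) || `[< F x /\ F y >].

Lemma collapse_refl : reflexive collapse_rel.
Proof. by move=> x; rewrite /collapse_rel eqxx. Qed.

Lemma collapse_sym : symmetric collapse_rel.
Proof.
move=> x y; rewrite /collapse_rel eq_sym; congr (_ || _).
by apply/asboolP/asboolP => -[].
Qed.

Lemma collapse_trans : transitive collapse_rel.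
Proof.
move=> y x z; rewrite /collapse_rel.
case/orP => [/eqP -> //|/asboolP [Fx Fy]].
case/orP => [/eqP <-|/asboolP [_ Fz]]; first by apply/orP; right; apply/asboolP.
by apply/orP; right; apply/asboolP.
Qed.

Canonical collapse_equiv := EquivRel collapse_rel
  collapse_refl collapse_sym collapse_trans.

Definition collapse_quot := {eq_quot collapse_equiv}%qT.

Definition quotient_space := quotient_topology collapse_quot.
End Collapse.

Definition hyperspace (X : topologicalType) :=
  {A : set X | A !=set0 /\ compact A}.

Section Vietoris.
Context (X : topologicalType).

HB.instance Definition _ := gen_eqMixin (hyperspace X).
HB.instance Definition _ := gen_choiceMixin (hyperspace X).

(** Subbasis: U^+ (index (true, U)) and U^- (index (false, U)), U open. *)
Definition vietoris_index := [set iU : bool * set X | open iU.2].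
Definition vietoris_subbase (iU : bool * set X) : set (hyperspace X) :=
  if iU.1 then [set A | sval A `<=` iU.2]
  else [set A | sval A `&` iU.2 !=set0].

HB.instance Definition _ :=
  isSubBaseTopological.Build (hyperspace X) vietoris_index vietoris_subbase.
End Vietoris.

From HB Require Import structures.
From mathcomp Require Import all_boot all_order all_algebra.
From mathcomp Require Import all_classical all_reals all_analysis.
From mathcomp Require Import finmap.
Local Open Scope classical_set_scope.
Local Open Scope quotient_scope.

(* Let C be a connected subset of K(X), A a member of C and S the union of C.
   If an open V and a closed G have the same trace on S and V misses A, then
   the members of C missing G form a Vietoris-clopen part of C containing A,
   so V misses S. Together with the separation of a point from a compact set
   by relatively clopen subsets of F and of X - F, this makes the image of
   (S - A) u F in X/F connected, hence a point, so S - A lies in F; the same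
   argument inside F then shows that S - A is empty. So members of C are
   contained in one another. *)

Lemma compact_separation {T : topologicalType} (K : set T) (P : set_system T) :
  compact K -> P !=set0 -> (forall E1 E2, P E1 -> P E2 -> P (E1 `&` E2)) ->
  (forall a, K a -> exists2 E, P E & exists2 N, nbhs a N & E `&` N = set0) ->
  exists2 E, P E & E `&` K = set0.
Proof.
move=> cK [E0 PE0] PI sepK; apply: contrapT => noE.
pose G := filter_from P (fun E => K `&` E).
have G_proper : ProperFilter G.
  apply: filter_from_proper => [|E PE]; last first.
    by apply/set0P/eqP => KE; apply: noE; exists E; rewrite // setIC.
  apply: filter_from_filter => [|E1 E2 P1 P2]; first by exists E0.
  by exists (E1 `&` E2); [exact: PI | move=> y [Ky [E1y E2y]]].
have [a [Ka clGa]] : K `&` cluster G !=set0.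
  by apply: cK => //; exists E0 => // y [].
have [E PE [N Na EN]] := sepK a Ka.
have [y [[_ Ey] Ny]] : K `&` E `&` N !=set0 by apply: clGa => //; exists E.
by have : (E `&` N) y by []; rewrite EN.
Qed.

Lemma totally_disconnected_separate_compact {T : topologicalType}
    (D K : set T) (x : T) :
  paper_totally_disconnected D -> compact K -> K `<=` D -> D x -> ~ K x ->
  exists2 E : set T, [/\ E `<=` D, clopen (E : set (subspace D)) & E x] &
    E `&` K = set0.
Proof.
move=> tdD cK KD Dx nKx; apply: compact_separation => //.
- exists D; split => //.
  by split; [exact: open_subspaceT | exact: closed_subspaceT].
- move=> E1 E2 [E1D clE1 E1x] [_ clE2 E2x]; split => //.
    by move=> y [/E1D].
  exact: clopenI.
move=> a Ka; have xa : x != a by apply/eqP => xa; apply: nKx; rewrite xa.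
have [U [[oU cU] Ux nUa]] := tdD x a Dx (KD a Ka) xa.
have /closed_subspaceP[G cG GU] := cU.
exists (U `&` D).
  split; [by move=> y [] | | by []].
  apply: clopenI; first by split.
  by split; [exact: open_subspaceT | exact: closed_subspaceT].
exists (~` G).
  apply: open_nbhs_nbhs; split; first exact: closed_openC.
  move=> Ga; apply: nUa.
  have : (G `&` D) a by split => //; exact: KD.
  by rewrite GU => -[].
by rewrite -GU; apply/seteqP; split => // y [[]].
Qed.

Lemma vietoris_subbase_open {X : topologicalType} (iU : bool * set X) :
  open iU.2 -> open (vietoris_subbase iU).
Proof.
move=> oU; exists [set vietoris_subbase iU]; last by rewrite bigcup_set1.
move=> _ ->; exists [fset iU]%fset.
  by move=> j; rewrite !inE => /eqP ->; apply/mem_set.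
rewrite (_ : [set` [fset iU]%fset] = [set iU]); last first.
  by apply/seteqP; split => j /=; rewrite !inE => /eqP.
by rewrite bigcap_set1.
Qed.

Section Collapse.
Context {X : topologicalType} (F : set X).
Local Notation pi := (\pi_(quotient_space F) : X -> quotient_space F).

Lemma collapse_eqP (x y : X) : pi x = pi y <-> x = y \/ F x /\ F y.
Proof.
split => [/eqquotP|xy]; rewrite /= /collapse_rel.
  by case/orP => [/eqP|/asboolP]; [left | right].
by apply/eqquotP/orP; case: xy => [->|/asboolP]; [left | right].
Qed.

End Collapse.

Section ConnectedHyperspace.
Context {X : topologicalType} (C : set (hyperspace X)) (A : hyperspace X).
Hypotheses (cC : connected C) (CA : C A).
Local Notation S := (\bigcup_(D in C) sval D).

Lemma connected_hyperspace_clopen_trace (V G : set X) :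
  open V -> closed G -> V `&` S = G `&` S -> V `&` sval A = set0 ->
  V `&` S = set0.
Proof.
move=> oV cG VG VA.
have VGE D y : C D -> sval D y -> V y <-> G y.
  move=> CD Dy; have Sy : S y by exists D.
  split => [Vy|Gy]; first by have : (V `&` S) y by []; rewrite VG => -[].
  by have : (G `&` S) y by []; rewrite -VG => -[].
have avoidG : C `&` [set D | sval D `<=` ~` G] = C.
  apply: cC.
  - exists A; split => // y Ay Gy.
    have : (V `&` sval A) y by split => //; apply/(VGE A y CA Ay).
    by rewrite VA.
  - exists [set D | sval D `<=` ~` G] => //.
    exact: (vietoris_subbase_open (true, ~` G) (closed_openC cG)).
  - exists (~` [set D | sval D `&` V !=set0]).
      exact/open_closedC/(vietoris_subbase_open (false, V)).
    apply/seteqP; split => D [CD DG]; split => //.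
      by move=> [y [Dy Vy]]; apply: (DG y Dy); apply/(VGE D y CD Dy).
    move=> y Dy Gy; apply: DG; exists y.
    by split => //; apply/(VGE D y CD Dy).
apply/seteqP; split => // y [Vy [D CD Dy]].
have [_ DG] : (C `&` [set D | sval D `<=` ~` G]) D by rewrite avoidG.
exact/(DG y Dy)/(VGE D y CD Dy).
Qed.

Hypothesis closedA : closed (sval A).
Local Notation R := (S `\` sval A).

Lemma remainder_trace_empty (D O Cl : set X) :
  paper_totally_disconnected D -> open O -> closed Cl -> Cl `<=` D ->
  O `&` R = Cl `&` R -> O `&` R = set0.
Proof.
move=> tdD oO cCl ClD ORCl; apply/seteqP; split => // x [Ox Rx].
have OClE y : R y -> O y <-> Cl y.
  move=> Ry; split => [Oy|Cly].
    by have : (O `&` R) y by []; rewrite ORCl => -[].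
  by have : (Cl `&` R) y by []; rewrite -ORCl => -[].
have Clx : Cl x by apply/OClE.
have cAC : compact (sval A `&` Cl).
  by apply: compact_closedI => //; case: (svalP A).
have [E [ED [oE cE] Ex] EK] := totally_disconnected_separate_compact _ _ _
  tdD cAC (fun y '(conj _ Cly) => ClD y Cly) (ClD x Clx)
  (fun '(conj Ax _) => Rx.2 Ax).
have [H oH HE] := (open_subspaceP D E).1 oE.
have [G cG GE] := (closed_subspaceP D E).1 cE.
have HGE y : D y -> (H y <-> E y) /\ (G y <-> E y).
  move=> Dy; split; split => [Hy|Ey].
  - by have : (H `&` D) y by []; rewrite HE => -[].
  - by have : (E `&` D) y by []; rewrite -HE => -[].
  - by have : (G `&` D) y by []; rewrite GE => -[].
  - by have : (E `&` D) y by []; rewrite -GE => -[].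
have : (O `&` H `&` ~` sval A) `&` S = set0.
  apply: connected_hyperspace_clopen_trace (G `&` Cl) _ _ _ _.
  - by apply: openI; [exact: openI | exact: closed_openC].
  - exact: closedI.
  - apply/seteqP; split => y [Vy Sy]; split => //.
      case: Vy => [[Oy Hy] nAy]; have Cly : Cl y by apply/(OClE y).
      by split => //; apply/(HGE y (ClD y Cly)).2/(HGE y (ClD y Cly)).1.
    case: Vy => Gy Cly; have Ey : E y by apply/(HGE y (ClD y Cly)).2.
    have nAy : ~ sval A y.
      by move=> Ay; have : (E `&` (sval A `&` Cl)) y by []; rewrite EK.
    split => //; split; first by apply/(OClE y).
    exact/(HGE y (ClD y Cly)).1.
  - by apply/seteqP; split => // y [[_ nAy] Ay].
have Hx : H x by apply/(HGE x (ClD x Clx)).1.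
case: Rx => Sx nAx VS.
by have : ((O `&` H `&` ~` sval A) `&` S) x by []; rewrite VS.
Qed.

Lemma collapse_remainder_connected (F : set X) (f0 : X) :
  paper_totally_disconnected (~` F) -> F f0 ->
  connected (\pi_(quotient_space F) @` (R `|` F)).
Proof.
set pi := \pi_(quotient_space F); set Sq := pi @` (R `|` F) => tdC Ff0.
have pi_cont : continuous pi by exact: (@pi_continuous X (collapse_quot F)).
have clopen_avoid_f0 U : (exists2 OY, open OY & U = Sq `&` OY) ->
    (exists2 ClY, closed ClY & U = Sq `&` ClY) -> ~ U (pi f0) -> U = set0.
  move=> [OY oOY UO] [ClY cClY UCl] nUf0.
  have OClE y : R y -> OY (pi y) <-> ClY (pi y).
    move=> Ry; have Sqy : Sq (pi y) by exists y => //; left.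
    split => [OYy|ClYy].
      have : U (pi y) by rewrite UO.
      by rewrite UCl => -[].
    have : U (pi y) by rewrite UCl.
    by rewrite UO => -[].
  have : pi @^-1` OY `&` R = set0.
    apply: (remainder_trace_empty _ _ (pi @^-1` ClY) tdC).
    - by move/continuousP : pi_cont; apply.
    - by move/continuous_closedP : pi_cont; apply.
    - move=> y ClYy Fy; apply: nUf0; rewrite UCl; split.
        by exists f0 => //; right.
      by have -> : pi f0 = pi y by apply/collapse_eqP; right.
    - by apply/seteqP; split => y [piy Ry]; split => //; apply/(OClE y Ry).
  move=> OR0; apply/seteqP; split => // u Uu.
  have [[z RFz zu] OYu] : (Sq `&` OY) u by rewrite -UO.
  case: RFz => [Rz|Fz].
    have : (pi @^-1` OY `&` R) z by split => //; rewrite /preimage /= zu.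
    by rewrite OR0.
  apply: nUf0; suff -> : pi f0 = u by [].
  by rewrite -zu; apply/collapse_eqP; right.
move=> B [b Bb] BO BCl.
have [Bf0|nBf0] := pselect (B (pi f0)); last first.
  by have := clopen_avoid_f0 B BO BCl nBf0; move/seteqP => [/(_ b Bb)].
have SqB0 : Sq `\` B = set0.
  apply: clopen_avoid_f0; last by case.
    case: BCl => ClB cClB ->; exists (~` ClB); first exact: closed_openC.
    by rewrite setDIr setDv set0U setDE.
  case: BO => OB oOB ->; exists (~` OB); first exact: open_closedC.
  by rewrite setDIr setDv set0U setDE.
apply/seteqP; split => [y|y Sqy]; first by case: BO => OB _ -> [].
by apply: contrapT => nBy; have : (Sq `\` B) y by []; rewrite SqB0.
Qed.

Lemma remainder_sub_collapsed (F : set X) :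
  paper_totally_disconnected (~` F) ->
  hereditarily_disconnected (quotient_space F) -> R `<=` F.
Proof.
move=> tdC hdY x Rx; apply: contrapT => nFx.
have [[f0 Ff0]|noF] := pselect (F !=set0); last first.
  have : setT `&` R = set0.
    apply: (remainder_trace_empty _ _ _ tdC openT closedT) => // y _ Fy.
    by apply: noF; exists y.
  by rewrite setTI => R0; have : R x by []; rewrite R0.
set pi := \pi_(quotient_space F); set Sq := pi @` (R `|` F).
have Sqf0 : Sq (pi f0) by exists f0 => //; right.
have Sqx : Sq (pi x) by exists x => //; left.
have [q Sq1] := hdY Sq (ex_intro _ _ Sqf0)
  (collapse_remainder_connected _ _ tdC Ff0).
rewrite Sq1 in Sqf0 Sqx.
have : pi x = pi f0 by move: Sqx Sqf0 => /= -> ->.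
by case/(collapse_eqP F) => [xf0|[]//]; apply: nFx; rewrite xf0.
Qed.

Lemma remainder_empty (F : set X) :
  closed F -> paper_totally_disconnected F -> R `<=` F -> R = set0.
Proof.
move=> cF tdF RF; rewrite -(setTI R).
apply: (remainder_trace_empty _ _ _ tdF openT cF) => //.
by rewrite setTI setIidr.
Qed.

Lemma connected_hyperspace_sub (F : set X) :
  closed F -> paper_totally_disconnected F ->
  paper_totally_disconnected (~` F) ->
  hereditarily_disconnected (quotient_space F) ->
  forall B, C B -> sval B `<=` sval A.
Proof.
move=> cF tdF tdC hdY B CB y By; apply: contrapT => nAy.
have : R y by split => //; exists B.
by rewrite (remainder_empty _ cF tdF (remainder_sub_collapsed _ tdC hdY)).
Qed.

End ConnectedHyperspace.

Theorem mainTheorem1 (X : topologicalType) (F : set X) :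
  hausdorff_space X ->
  closed F ->
  paper_totally_disconnected F ->
  paper_totally_disconnected (~` F) ->
  hereditarily_disconnected (quotient_space F) ->
  hereditarily_disconnected (hyperspace X).
Proof.
move=> hX cF tdF tdC hdY C [A CA] cC; exists A.
have closedK (K : hyperspace X) : closed (sval K).
  by apply: compact_closed => //; case: (svalP K).
apply/seteqP; split => [B CB|_ ->//].
move: A B CA CB => [A hA] [B hB] CA CB; apply: eq_exist; apply/seteqP; split.
- exact: (connected_hyperspace_sub _ _ cC CA (closedK _) _ cF tdF tdC hdY _ CB).
- exact: (connected_hyperspace_sub _ _ cC CB (closedK _) _ cF tdF tdC hdY _ CA).
Qed.
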